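(* In $NOM$, if a sequent $\Gamma\vdash\phi$ is derivable, then for every finite sequence of formulas $\Delta$, the sequent $\Delta,\Gamma\vdash\phi$ is also derivable.
   Context: The propositional deductive system $NOM$: formulas are built from propositional letters using $\wedge$, $\rightarrow$, $\neg$. Sequents are $\phi_1,\ldots,\phi_n\vdash\psi$ ($n\ge0$) with antecedent a finite ordered sequence; commas denote concatenation. With $\Gamma$ a finite possibly empty sequence of formulas and $\phi,\psi,\chi$ formulas, the rules of $NOM$ are: (assumption) $\Gamma,\phi\vdash\phi$; (cut) $\Gamma\vdash\phi$, $\Gamma,\phi\vdash\psi$ $\Rightarrow$ $\Gamma\vdash\psi$; (paste) $\Gamma\vdash\phi$, $\Gamma\vdash\psi$ $\Rightarrow$ $\Gamma,\phi\vdash\psi$; (compatible exchange) $\Gamma,\phi,\psi\vdash\phi$, $\Gamma,\phi,\psi\vdash\chi$, $\Gamma,\psi,\phi\vdash\psi$ $\Rightarrow$ $\Gamma,\psi,\phi\vdash\chi$; ($\wedge$-intro) $\Gamma\vdash\phi$, $\Gamma\vdash\psi$ $\Rightarrow$ $\Gamma\vdash\phi\wedge\psi$; ($\wedge$-elim) $\Gamma\vdash\phi\wedge\psi$ $\Rightarrow$ $\Gamma\vdash\phi$ and $\Rightarrow$ $\Gamma\vdash\psi$; ($\rightarrow$-intro) $\Gamma,\phi\vdash\psi$ $\Rightarrow$ $\Gamma\vdash\phi\rightarrow\psi$; ($\rightarrow$-elim) $\Gamma\vdash\phi\rightarrow\psi$ $\Rightarrow$ $\Gamma,\phi\vdash\psi$;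 (excluded middle) $\Gamma,\phi\vdash\psi$, $\Gamma,\neg\phi\vdash\psi$ $\Rightarrow$ $\Gamma\vdash\psi$; (explosion) $\Gamma\vdash\neg\phi$ $\Rightarrow$ $\Gamma,\phi\vdash\psi$. *)

From Stdlib Require Import List.
Import ListNotations.

Inductive formula : Type :=
| Var : nat -> formula
| And : formula -> formula -> formula
| Imp : formula -> formula -> formula
| Neg : formula -> formula.

(* A sequent Gamma |- phi; the antecedent is an ordered finite list,
   and "Gamma, phi" is Gamma ++ [phi]. *)
Inductive NOM : list formula -> formula -> Prop :=
| nom_assumption : forall G p, NOM (G ++ [p]) p
| nom_cut : forall G p q, NOM G p -> NOM (G ++ [p]) q -> NOM G q
| nom_paste : forall G p q, NOM G p -> NOM G q -> NOM (G ++ [p]) q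
| nom_exchange : forall G p q r,
    NOM (G ++ [p; q]) p -> NOM (G ++ [p; q]) r -> NOM (G ++ [q; p]) q ->
    NOM (G ++ [q; p]) r
| nom_and_intro : forall G p q, NOM G p -> NOM G q -> NOM G (And p q)
| nom_and_elim_l : forall G p q, NOM G (And p q) -> NOM G p
| nom_and_elim_r : forall G p q, NOM G (And p q) -> NOM G q
| nom_imp_intro : forall G p q, NOM (G ++ [p]) q -> NOM G (Imp p q)
| nom_imp_elim : forall G p q, NOM G (Imp p q) -> NOM (G ++ [p]) q
| nom_em : forall G p q, NOM (G ++ [p]) q -> NOM (G ++ [Neg p]) q -> NOM G q
| nom_explosion : forall G p q, NOM G (Neg p) -> NOM (G ++ [p]) q.

From Stdlib Require Import List.
Import ListNotations.

(* Every rule of NOM inspects only the right end of the antecedent and leaves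
   the rest as an arbitrary context G, so a prefix Delta can be absorbed into G:
   by induction on the derivation, after reassociating Delta ++ (G ++ l) into
   (Delta ++ G) ++ l, each rule instance is again an instance of the same rule. *)

Theorem proposition3p1 :
  forall (Gamma : list formula) (phi : formula),
    NOM Gamma phi -> forall Delta : list formula, NOM (Delta ++ Gamma) phi.
Proof.
  intros Gamma phi Hder.
  induction Hder as [G p | G p q _ IHp _ IHq | G p q _ IHp _ IHq
                    | G p q r _ IHpq _ IHr _ IHqp | G p q _ IHp _ IHq
                    | G p q _ IHpq | G p q _ IHpq | G p q _ IHq
                    | G p q _ IHpq | G p q _ IHp _ IHn | G p q _ IHn];
    intros Delta; rewrite ?app_assoc.
  - apply nom_assumption.
  - apply nom_cut with p; [apply IHp | rewrite <- app_assoc; apply IHq].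
  - apply nom_paste; [apply IHp | apply IHq].
  - apply nom_exchange; rewrite <- app_assoc; [apply IHpq | apply IHr | apply IHqp].
  - apply nom_and_intro; [apply IHp | apply IHq].
  - apply nom_and_elim_l with q; apply IHpq.
  - apply nom_and_elim_r with p; apply IHpq.
  - apply nom_imp_intro; rewrite <- app_assoc; apply IHq.
  - apply nom_imp_elim; apply IHpq.
  - apply nom_em with p; rewrite <- app_assoc; [apply IHp | apply IHn].
  - apply nom_explosion; apply IHn.
Qed.
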